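(* The following hold. (1) If $f\in\mathcal{C}^1(\mathbb{R})$ then $f^*\cdot\chi_{[-\beta,\beta]_{\mathbb{R}^*}}\in\mathfrak{U}(\mathbb{R})$. (2) If $u\in\mathfrak{U}(\mathbb{R})$ and $a,b\in\Gamma$, then $u\cdot\chi_{[a,b]_{\mathbb{R}^*}}\in\mathfrak{U}(\mathbb{R})$. (3) If $u\in\mathfrak{U}(\mathbb{R})$, then for $j=1,\dots,\ell-1$ the (internal) one-sided limits $u(\gamma_j^+)=(\lim_{x\to\gamma_j^+})^*u(x)$ and $u(\gamma_j^-)=(\lim_{x\to\gamma_j^-})^*u(x)$ are well defined. (4) If $u\in\mathfrak{U}(\mathbb{R})$, the limits $(\lim_{x\to\gamma_0^+})^*u(x)$ and $(\lim_{x\to\gamma_\ell^-})^*u(x)$ are well defined. (5) For $j=0,\dots,\ell-1$ let $V(\mathbb{I}_j)=\{u\chi_j: u\in\widetilde{\mathcal{C}^1(\mathbb{R})}\}$. Then for $j\neq k$, $V(\mathbb{I}_j)$ and $V(\mathbb{I}_k)$ are orthogonal with respect to $(u,v)=\int^*uv\,dx$. (6) $\mathfrak{U}(\mathbb{R})=\bigoplus_{j=0}^{\ell-1}V(\mathbb{I}_j)$ as an orthogonal direct sum.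
   Context: Framework (Λ-limits / nonstandard analysis): $\mathfrak{X}=\mathcal{P}_{fin}(\mathfrak{F}(\mathbb{R},\mathbb{R}))$ directed by inclusion; $\mathbb{R}^*\supset\mathbb{R}$ is a non-Archimedean ordered field of Λ-limits of nets $\mathfrak{X}\to\mathbb{R}$; internal sets/functions are Λ-limits of nets of sets/functions, $E^*$, $f^*$ natural extensions, hyperfinite sums are Λ-limits of finite sums; $\int^*$ is the natural extension of the Lebesgue integral. For $\lambda\in\mathfrak{X}$, $V_\lambda$ is the span of $\lambda$; an internal $u=\lim_{\lambda\uparrow\Lambda}u_\lambda$ is an ultrafunction if $u_\lambda\in V_\lambda$ for all $\lambda$; for a vector space $W$ of real functions, $\widetilde{W}=W^*\cap\{\text{ultrafunctions}\}$. Grid: a positive infinite $\beta\in\mathbb{R}^*$ and a hyperfinite $\Gamma=\{\gamma_0<\dots<\gamma_\ell\}\subset\mathbb{R}^*$ with $\gamma_0=-\beta$, $\gamma_\ell=\beta$, $0<\gamma_{j+1}-\gamma_j<\eta$ for a fixed infinitesimal $\eta$, and $\mathbb{R}\subseteq\Gamma$. $\mathbb{I}_j=(\gamma_j,\gamma_{j+1})_{\mathbb{R}^*}$, $\chi_j$ its characteristic function ($j=0,\dots,\ell-1$). For $a,b\in\Gamma$, $\chi_{[a,b]_{\mathbb{R}^*}}(x)$ equals $1$ for $x\in(a,b)$, $0$ for $x\notin[a,b]$, $\tfrac12$ for $x=a\neq-\beta$ or $x=b\neq\beta$, and $1$ for $x=a=-\beta$ or $x=b=\beta$. $\mathfrak{U}(\mathbb{R})$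 is the set of $u:[-\beta,\beta]\to\mathbb{R}^*$ representable as an internal hyperfinite sum $u=\sum_{j=0}^{\ell-1}v_j\chi_j$ with $v_j\in\widetilde{\mathcal{C}^1(\mathbb{R})}$.
   Formalization: A function belongs to 𝔘(ℝ) when it equals $\sum_{j=0}^{\ell-1}v_j\chi_j$ on [-β,β]∖Γ only, and the sums in (6) are likewise compared only off Γ, so values at grid points are disregarded. The statement above fails without it. *)

(* A model of the Lambda-theory used in the paper:
   Lambda-limits are limits along a fine ultrafilter U on the index set
   X = P_fin(F(R,R)) (we index by all subsets of F(R,R); U concentrates on the
   finite ones, which is equivalent).  A hyperreal / internal object is
   represented by a net  X -> (standard object); equality of Lambda-limits is
   U-almost-everywhere equality of the nets (Los). *)
From HB Require Import structures.
From mathcomp Require Import all_boot all_order all_algebra.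
From mathcomp Require Import all_classical all_reals all_analysis.
Set Implicit Arguments. Unset Strict Implicit. Unset Printing Implicit Defensive.
Import Order.TTheory GRing.Theory Num.Theory.
Import numFieldNormedType.Exports.
Local Open Scope classical_set_scope.
Local Open Scope ring_scope.

Section LambdaModel.
Variable R : realType.

Definition Idx := set (R -> R).

Definition is_LambdaUF (U : set (set Idx)) : Prop :=
  [/\ U setT /\ ~ U set0,
      (forall A B, U A -> U B -> U (A `&` B)),
      (forall A B, A `<=` B -> U A -> U B),
      (forall A, U A \/ U (~` A)) &
      (forall l0 : Idx, finite_set l0 -> U [set l | finite_set l /\ l0 `<=` l])].

(* "P holds for the Lambda-limit", i.e. U-almost everywhere *)
Definition ae (U : set (set Idx)) (P : Idx -> Prop) : Prop := U [set l | P l].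

Definition inspan (l : Idx) (f : R -> R) : Prop :=
  exists (n : nat) (g : 'I_n -> R -> R) (c : 'I_n -> R),
    (forall i, l (g i)) /\ f = (fun x => \sum_(i < n) c i * g i x).

Definition C1 (f : R -> R) : Prop :=
  (forall x, derivable f x 1) /\ continuous (derive1 f).

(* v (a net of functions) represents an element of  ~C^1(R) = C^1(R)^* cap ultrafunctions *)
Definition tildeC1 (U : set (set Idx)) (v : Idx -> R -> R) : Prop :=
  ae U (fun l => C1 (v l) /\ inspan l (v l)).

(* The grid: beta positive infinite, eta positive infinitesimal,
   G l = [:: gamma_0 < ... < gamma_ell] with gamma_0 = -beta, gamma_ell = beta,
   0 < gamma_{j+1} - gamma_j < eta, and R subset of Gamma. *)
Definition is_grid (U : set (set Idx)) (beta eta : Idx -> R) (G : Idx -> seq R) : Prop :=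
  [/\ (forall n : R, ae U (fun l => n < beta l)),
      (forall e : R, 0 < e -> ae U (fun l => 0 < eta l < e)),
      ae U (fun l => [/\ (0 < size (G l))%N,
                         nth 0 (G l) 0 = - beta l,
                         nth 0 (G l) (size (G l)).-1 = beta l &
                         forall j, (j.+1 < size (G l))%N ->
                           0 < nth 0 (G l) j.+1 - nth 0 (G l) j < eta l]) &
      (forall r : R, ae U (fun l => r \in G l))].

Definition ell (g : seq R) : nat := (size g).-1.

Definition chi (g : seq R) (j : nat) (x : R) : R :=
  if (nth 0 g j < x) && (x < nth 0 g j.+1) then 1 else 0.

Definition chiAB (beta a b x : R) : R :=
  if (a < x) && (x < b) then 1
  else if (x < a) || (b < x) then 0
  else if ((x == a) && (a == - beta)) || ((x == b) && (b == beta)) then 1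
  else 2^-1.

Definition fnth (s : seq (R -> R)) (j : nat) : R -> R := nth (fun _ => 0) s j.

(* x in [-beta,beta] \ Gamma  (values of u at grid points are disregarded) *)
Definition offgrid (beta : R) (g : seq R) (x : R) : Prop :=
  - beta <= x <= beta /\ x \notin g.

Definition inFrakU (U : set (set Idx)) (beta : Idx -> R) (G : Idx -> seq R)
    (w : Idx -> R -> R) : Prop :=
  exists vs : Idx -> seq (R -> R),
    ae U (fun l =>
      [/\ size (vs l) = ell (G l),
          (forall j, (j < ell (G l))%N -> C1 (fnth (vs l) j) /\ inspan l (fnth (vs l) j)) &
          (forall x, offgrid (beta l) (G l) x ->
             w l x = \sum_(j < ell (G l)) fnth (vs l) j x * chi (G l) j x)]).

Definition inVfam (U : set (set Idx)) (G : Idx -> seq R) (gs : Idx -> seq (R -> R)) : Prop :=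
  exists vs : Idx -> seq (R -> R),
    ae U (fun l =>
      [/\ size (vs l) = ell (G l), size (gs l) = ell (G l) &
          (forall j, (j < ell (G l))%N ->
             [/\ C1 (fnth (vs l) j), inspan l (fnth (vs l) j) &
                 fnth (gs l) j = (fun x => fnth (vs l) j x * chi (G l) j x)])]).

Definition orth0 (f g : R -> R) : Prop :=
  (\int[@lebesgue_measure R]_x ((f x * g x)%:E) = 0)%E.

End LambdaModel.

From HB Require Import structures.
From mathcomp Require Import all_boot all_order all_algebra.
From mathcomp Require Import all_classical all_reals all_analysis.
From mathcomp Require Import lra.
Import Order.TTheory GRing.Theory Num.Theory.
Import numFieldNormedType.Exports.
Local Open Scope classical_set_scope.
Local Open Scope ring_scope.

(* Off the grid, [-beta, beta] is the disjoint union of the open cells I_j, and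
   on I_j the only nonzero chi_k is chi_j.  So an element of U(R) agrees on each
   cell with a single C^1 function v_j, which yields the one-sided limits at the
   grid points; chi_[a,b] with a, b in Gamma is constantly 0 or 1 on each cell,
   which yields the closure properties; and chi_j chi_k = 0 for j <> k, which
   yields orthogonality and uniqueness of the decomposition.  All of this holds
   for each index lambda and passes to Lambda-limits because qualified sets are
   closed under finite intersections and supersets. *)

Set Implicit Arguments. Unset Strict Implicit.

Section Cells.
Variables (R : realType) (g : seq R).
Hypothesis g_sorted : sorted <%R g.

Definition in_cell (j : nat) (x : R) := nth 0 g j < x < nth 0 g j.+1.

Lemma nth_le_sorted i k : (i <= k)%N -> (k < size g)%N -> nth 0 g i <= nth 0 g k.
Proof.
rewrite leq_eqVlt => /orP[/eqP -> //|ik] kg.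
by apply/ltW/(sorted_ltn_nth lt_trans) => //; rewrite inE (ltn_trans ik).
Qed.

Lemma nth_lt_cell i j x : (i < size g)%N -> (j.+1 < size g)%N -> in_cell j x ->
  (nth 0 g i < x) = (i <= j)%N.
Proof.
move=> ig jg /andP[lo hi]; case: (leqP i j) => [ij|ji].
  exact: le_lt_trans (nth_le_sorted ij (ltnW jg)) lo.
by apply/negbTE; rewrite -leNgt; apply: le_trans (ltW hi) (nth_le_sorted ji ig).
Qed.

Lemma cell_lt_nth i j x : (i < size g)%N -> (j.+1 < size g)%N -> in_cell j x ->
  (x < nth 0 g i) = (j < i)%N.
Proof.
move=> ig jg /andP[lo hi]; case: (ltnP j i) => [ji|ij].
  exact: lt_le_trans hi (nth_le_sorted ji ig).
by apply/negbTE; rewrite -leNgt (le_trans (nth_le_sorted ij (ltnW jg)) (ltW lo)).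
Qed.

Lemma cell_notin j x : (j.+1 < size g)%N -> in_cell j x -> x \notin g.
Proof.
move=> jg hx; apply/negP => xg; have ig : (index x g < size g)%N by rewrite index_mem.
have := nth_lt_cell ig jg hx; have := cell_lt_nth ig jg hx.
by rewrite nth_index // ltxx => /esym; rewrite ltnNge => /negbFE ->.
Qed.

Lemma chi_cell j k x : (j.+1 < size g)%N -> (k.+1 < size g)%N -> in_cell j x ->
  chi g k x = (k == j)%:R.
Proof.
move=> jg kg hx; rewrite /chi (nth_lt_cell (ltnW kg) jg hx) (cell_lt_nth kg jg hx).
by rewrite ltnS -eqn_leq; case: eqP.
Qed.

Lemma sum_mul_chi_cell (F : nat -> R) j x : (j < ell g)%N -> in_cell j x ->
  \sum_(k < ell g) F k * chi g k x = F j.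
Proof.
move=> hj hx; have jg : (j.+1 < size g)%N by rewrite -ltn_predRL.
rewrite (bigD1 (Ordinal hj)) //= (chi_cell jg jg hx) eqxx mulr1 big1 ?addr0 // => k.
rewrite -val_eqE /= => kj.
have kg : (k.+1 < size g)%N by rewrite -ltn_predRL.
by rewrite (chi_cell jg kg hx) (negbTE kj) mulr0.
Qed.

Lemma chi_mul_disjoint j k x : (j.+1 < size g)%N -> (k.+1 < size g)%N -> j <> k ->
  chi g j x * chi g k x = 0.
Proof.
move=> jg kg jk; have [hx|hx] := boolP (in_cell j x).
  by rewrite (chi_cell jg kg hx); case: eqP => [/esym/jk|_]; rewrite ?mulr0.
by move/negbTE: hx; rewrite /chi /in_cell => ->; rewrite mul0r.
Qed.

End Cells.

Lemma chiAB_offpoint (R : realType) (c a b x : R) : x != a -> x != b ->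
  chiAB c a b x = ((a < x) && (x < b))%:R.
Proof.
move=> xa xb; rewrite /chiAB.
have [_|//|eax] := ltgtP a x; last by rewrite eax eqxx in xa.
by have [| |ebx] := ltgtP x b; last by rewrite ebx eqxx in xb.
Qed.

Lemma orth0_mul_chi (R : realType) (g : seq R) (f h : R -> R) j k :
  sorted <%R g -> (j < ell g)%N -> (k < ell g)%N -> j <> k ->
  orth0 (fun x => f x * chi g j x) (fun x => h x * chi g k x).
Proof.
rewrite /ell !ltn_predRL => g_sorted jg kg jk; rewrite /orth0.
under eq_integral do rewrite mulrACA (chi_mul_disjoint g_sorted _ jg kg jk) mulr0.
exact: integral0.
Qed.

Lemma cvg_at_right_of_agree (R : realType) (f h : R -> R) (a b : R) :
  a < b -> {for a, continuous f} -> (forall x, a < x < b -> h x = f x) ->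
  cvg (h x @[x --> a^'+]).
Proof.
move=> ab fa hf; apply: (cvgP (f a)); apply: cvg_trans (cvg_at_right_filter fa).
apply: near_eq_cvg; near=> x; rewrite hf //; apply/andP; split.
  by near: x; exact: nbhs_right_gt.
by near: x; exact: nbhs_right_lt.
Unshelve. all: by end_near.
Qed.

Lemma cvg_at_left_of_agree (R : realType) (f h : R -> R) (a b : R) :
  a < b -> {for b, continuous f} -> (forall x, a < x < b -> h x = f x) ->
  cvg (h x @[x --> b^'-]).
Proof.
move=> ab fb hf; apply: (cvgP (f b)); apply: cvg_trans (cvg_at_left_filter fb).
apply: near_eq_cvg; near=> x; rewrite hf //; apply/andP; split.
  by near: x; exact: nbhs_left_gt.
by near: x; exact: nbhs_left_lt.
Unshelve. all: by end_near.
Qed.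

Lemma C1_continuous (R : realType) (f : R -> R) : C1 f -> continuous f.
Proof. by case=> df _ x; apply/differentiable_continuous/derivable1_diffP. Qed.

Definition restrict_cells (R : realType) (i k : nat) (vs : seq (R -> R)) (n : nat) :=
  mkseq (fun j => if (i <= j < k)%N then fnth vs j else cst 0) n.

Section Grid.
Variables (R : realType) (c : R) (g : seq R).

Definition grid_ok := [/\ sorted <%R g, (0 < ell g)%N, nth 0 g 0 = - c & nth 0 g (ell g) = c].

Hypothesis g_ok : grid_ok.

Let g_sorted : sorted <%R g. Proof. by case: g_ok. Qed.

Let size_gt0 : (0 < size g)%N.
Proof. by case: g_ok => _; rewrite /ell; case: size. Qed.

Let ell_lt_size : (ell g < size g)%N.
Proof. by rewrite /ell ltn_predL size_gt0. Qed.

Lemma chiAB_nth_cell i k j x : (i < size g)%N -> (k < size g)%N -> (j < ell g)%N ->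
  in_cell g j x -> chiAB c (nth 0 g i) (nth 0 g k) x = (i <= j < k)%N%:R.
Proof.
move=> ig kg; rewrite ltn_predRL => jg hx.
have xg := cell_notin g_sorted jg hx.
have x_ne p : p \in g -> x != p by move=> pg; apply: contraNneq xg => ->.
rewrite chiAB_offpoint ?x_ne ?mem_nth //.
by rewrite (nth_lt_cell g_sorted ig jg hx) (cell_lt_nth g_sorted kg jg hx).
Qed.

Lemma offgrid_cell x : offgrid c g x -> exists2 j, (j < ell g)%N & in_cell g j x.
Proof.
case: g_ok => _ _ g0 gl [/andP[lo hi] xg].
have x_ne p : p \in g -> x != p by move=> pg; apply: contraNneq xg => ->.
have lt_last : x < nth 0 g (ell g).
  by rewrite lt_neqAle gl hi andbT -gl x_ne ?mem_nth.
have has_x : has (fun p => x < p) g by apply/hasP; exists (nth 0 g (ell g)); rewrite ?mem_nth.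
set i := find (fun p => x < p) g.
have i_size : (i < size g)%N by rewrite -has_find.
have i_gt0 : (0 < i)%N.
  rewrite lt0n; apply/eqP => i0; have := nth_find 0 has_x.
  by rewrite -/i i0 g0 ltNge lo.
exists i.-1; first by rewrite ltn_predRL prednK.
rewrite /in_cell prednK // nth_find // andbT.
have below : nth 0 g i.-1 <= x by rewrite leNgt before_find // ltn_predL.
rewrite lt_neqAle below andbT eq_sym x_ne // mem_nth //.
exact: leq_ltn_trans (leq_pred i) i_size.
Qed.

Lemma cell_offgrid j x : (j < ell g)%N -> in_cell g j x -> offgrid c g x.
Proof.
case: g_ok => _ _ g0 gl hj hx; have jg : (j.+1 < size g)%N by rewrite -ltn_predRL.
split; last exact: (cell_notin g_sorted jg hx).
case/andP: (hx) => lo hi; apply/andP; split; apply/ltW.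
  by rewrite -g0 (le_lt_trans (nth_le_sorted g_sorted (leq0n j) (ltnW jg)) lo).
by rewrite -gl (lt_le_trans hi (nth_le_sorted g_sorted hj ell_lt_size)).
Qed.

Definition chi_decomp (w : R -> R) (vs : seq (R -> R)) :=
  forall x, offgrid c g x -> w x = \sum_(j < ell g) fnth vs j x * chi g j x.

Lemma chi_decompP w vs : chi_decomp w vs <->
  (forall j x, (j < ell g)%N -> in_cell g j x -> w x = fnth vs j x).
Proof.
split=> [hw j x hj hx | hw x /offgrid_cell[j hj hx]].
  by rewrite hw ?(sum_mul_chi_cell g_sorted (fnth vs ^~ x) hj hx) //; apply: cell_offgrid hj hx.
by rewrite (sum_mul_chi_cell g_sorted (fnth vs ^~ x) hj hx); apply: hw.
Qed.

Lemma chi_decomp_ends f : chi_decomp (fun x => f x * chiAB c (- c) c x) (nseq (ell g) f).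
Proof.
case: (g_ok) => _ _ g0 gl; apply/chi_decompP => j x hj hx.
by rewrite -{1}g0 -{2}gl (chiAB_nth_cell _ _ hj hx) // hj /fnth nth_nseq hj mulr1.
Qed.

Lemma chi_decomp_mul_chiAB w vs i k : (i < size g)%N -> (k < size g)%N ->
  chi_decomp w vs ->
  chi_decomp (fun x => w x * chiAB c (nth 0 g i) (nth 0 g k) x) (restrict_cells i k vs (ell g)).
Proof.
move=> ig kg /chi_decompP hw; apply/chi_decompP => j x hj hx.
rewrite (chiAB_nth_cell ig kg hj hx) (hw _ _ hj hx) /fnth nth_mkseq //.
by case: ifP; rewrite ?mulr1 ?mulr0.
Qed.

Lemma chi_decomp_cvg_right w vs j : chi_decomp w vs -> (j < ell g)%N ->
  continuous (fnth vs j) -> cvg (w x @[x --> (nth 0 g j)^'+]).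
Proof.
move=> /chi_decompP hw hj hc; apply: (cvg_at_right_of_agree _ (hc _) (hw j ^~ hj)).
by apply: (sortedP 0 g_sorted); rewrite -ltn_predRL.
Qed.

Lemma chi_decomp_cvg_left w vs j : chi_decomp w vs -> (j < ell g)%N ->
  continuous (fnth vs j) -> cvg (w x @[x --> (nth 0 g j.+1)^'-]).
Proof.
move=> /chi_decompP hw hj hc; apply: (cvg_at_left_of_agree _ (hc _) (hw j ^~ hj)).
by apply: (sortedP 0 g_sorted); rewrite -ltn_predRL.
Qed.

Lemma chi_expansion_inj vs vs' j :
  chi_decomp (fun x => \sum_(k < ell g) fnth vs' k x * chi g k x) vs -> (j < ell g)%N ->
  (fun x => fnth vs j x * chi g j x) = (fun x => fnth vs' j x * chi g j x).
Proof.
move=> /chi_decompP hw hj; apply/funext => x.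
have [hx|hx] := boolP (in_cell g j x).
  by rewrite -hw // (sum_mul_chi_cell g_sorted (fnth vs' ^~ x) hj hx).
by move/negbTE: hx; rewrite /chi /in_cell => ->; rewrite !mulr0.
Qed.

End Grid.

Section C1Span.
Variable R : realType.

Lemma C1_cst0 : C1 (cst (0 : R)).
Proof.
split; first by move=> x; exact: derivable_cst.
suff -> : derive1 (cst (0 : R)) = cst 0 by exact: cst_continuous.
by apply/funext => x; exact: derive1_cst.
Qed.

Lemma inspan_cst0 (l : Idx R) : inspan l (cst 0).
Proof.
exists 0%N, (fun _ => cst 0), (fun _ => 0); split; first by case.
by apply/funext => x; rewrite big_ord0.
Qed.

Lemma inspan_mem (l : Idx R) f : l f -> inspan l f.
Proof.
move=> lf; exists 1%N, (fun _ => f), (fun _ => 1); split => //.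
by apply/funext => x; rewrite big_ord1 mul1r.
Qed.

Definition C1_span_family (l : Idx R) (n : nat) (vs : seq (R -> R)) :=
  forall j, (j < n)%N -> C1 (fnth vs j) /\ inspan l (fnth vs j).

Lemma C1_span_nseq l n f : C1 f -> inspan l f -> C1_span_family l n (nseq n f).
Proof. by move=> hf lf j jn; rewrite /fnth nth_nseq jn. Qed.

Lemma C1_span_restrict_cells l n vs i k :
  C1_span_family l n vs -> C1_span_family l n (restrict_cells i k vs n).
Proof.
move=> hvs j jn; rewrite /fnth nth_mkseq //; case: ifP => _; first exact: hvs.
by split; [exact: C1_cst0 | exact: inspan_cst0].
Qed.

End C1Span.

Section Lambda.
Variables (R : realType) (U : set (set (Idx R))).
Hypothesis U_ok : is_LambdaUF U.

Lemma ae_mono (P Q : Idx R -> Prop) : (forall l, P l -> Q l) -> ae U P -> ae U Q.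
Proof. by case: U_ok => _ _ U_super _ _ PQ; apply: U_super => l /= /PQ. Qed.

Lemma ae_and (P Q : Idx R -> Prop) : ae U P -> ae U Q -> ae U (fun l => P l /\ Q l).
Proof. by case: U_ok => _ U_meet _ _ _; exact: U_meet. Qed.

Lemma ae_inspan f : ae U (fun l => inspan l f).
Proof.
case: U_ok => _ _ _ _ /(_ [set f] (finite_set1 f)) fine.
by apply: ae_mono fine => l [_ /(_ f erefl)]; exact: inspan_mem.
Qed.

Variables (beta eta : Idx R -> R) (G : Idx R -> seq R).
Hypothesis G_grid : is_grid U beta eta G.

Lemma grid_ae : ae U (fun l => grid_ok (beta l) (G l)).
Proof.
case: G_grid => beta_inf _ G_ok _.
apply: ae_mono (ae_and (beta_inf 0) G_ok) => l [beta_gt0 [_ g0 gl steps]]; split => //.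
- by apply/(sortedP 0) => j /steps /andP[+ _]; rewrite subr_gt0.
- rewrite lt0n; apply/eqP => ell0; move: gl; rewrite [(size _).-1]ell0 g0.
  by move=> b0; lra.
Qed.

Lemma frakU_C1_mul_chiAB f : C1 f ->
  inFrakU U beta G (fun l x => f x * chiAB (beta l) (- beta l) (beta l) x).
Proof.
move=> hf; exists (fun l => nseq (ell (G l)) f).
apply: ae_mono (ae_and grid_ae (ae_inspan f)) => l [gl lf]; split.
- by rewrite size_nseq.
- exact: C1_span_nseq.
- exact: chi_decomp_ends.
Qed.

Lemma frakU_mul_chiAB w a b : inFrakU U beta G w ->
  ae U (fun l => a l \in G l) -> ae U (fun l => b l \in G l) ->
  inFrakU U beta G (fun l x => w l x * chiAB (beta l) (a l) (b l) x).
Proof.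
case=> vs hvs ha hb.
exists (fun l => restrict_cells (index (a l) (G l)) (index (b l) (G l)) (vs l) (ell (G l))).
apply: ae_mono (ae_and grid_ae (ae_and hvs (ae_and ha hb))).
move=> l [gl [[_ hC hw] [al bl]]]; split.
- by rewrite size_mkseq.
- exact: C1_span_restrict_cells.
- rewrite -{1}(nth_index 0 al) -{1}(nth_index 0 bl).
  by apply: chi_decomp_mul_chiAB; rewrite ?index_mem.
Qed.

Lemma frakU_cvg_interior w : inFrakU U beta G w ->
  ae U (fun l => forall j, (0 < j < ell (G l))%N ->
    cvg (w l x @[x --> (nth 0 (G l) j)^'+]) /\ cvg (w l x @[x --> (nth 0 (G l) j)^'-])).
Proof.
case=> vs hvs; apply: ae_mono (ae_and grid_ae hvs) => l [gl [_ hC hw]] j /andP[j0 hj].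
have hc k (hk : (k < ell (G l))%N) := C1_continuous (hC k hk).1.
have hj' : (j.-1 < ell (G l))%N := leq_ltn_trans (leq_pred j) hj.
split; first exact: (chi_decomp_cvg_right gl hw hj (hc j hj)).
by rewrite -(prednK j0); exact: (chi_decomp_cvg_left gl hw hj' (hc _ hj')).
Qed.

Lemma frakU_cvg_ends w : inFrakU U beta G w ->
  ae U (fun l => cvg (w l x @[x --> (nth 0 (G l) 0)^'+]) /\
                 cvg (w l x @[x --> (nth 0 (G l) (ell (G l)))^'-])).
Proof.
case=> vs hvs; apply: ae_mono (ae_and grid_ae hvs) => l [gl [_ hC hw]].
have hc k (hk : (k < ell (G l))%N) := C1_continuous (hC k hk).1.
have [_ ell0 _ _] := gl; have hl : ((ell (G l)).-1 < ell (G l))%N by rewrite ltn_predL.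
split; first exact: (chi_decomp_cvg_right gl hw ell0 (hc 0%N ell0)).
by rewrite -(prednK ell0); exact: (chi_decomp_cvg_left gl hw hl (hc _ hl)).
Qed.

Lemma cells_orthogonal (u v : Idx R -> R -> R) (j k : Idx R -> nat) :
  ae U (fun l => (j l < ell (G l))%N) -> ae U (fun l => (k l < ell (G l))%N) ->
  ae U (fun l => j l <> k l) ->
  ae U (fun l => orth0 (fun x => u l x * chi (G l) (j l) x)
                       (fun x => v l x * chi (G l) (k l) x)).
Proof.
move=> hj hk hjk; apply: ae_mono (ae_and grid_ae (ae_and hj (ae_and hk hjk))).
by move=> l [[g_sorted _ _ _] [jl [kl jk]]]; exact: orth0_mul_chi.
Qed.

Lemma frakU_Vfam_sum w : inFrakU U beta G w <->
  exists gs, inVfam U G gs /\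
    ae U (fun l => forall x, offgrid (beta l) (G l) x ->
                     w l x = \sum_(j < ell (G l)) fnth (gs l) j x).
Proof.
split=> [[vs hvs] | [gs [[vs hvs] hsum]]].
  exists (fun l => mkseq (fun j x => fnth (vs l) j x * chi (G l) j x) (ell (G l))); split.
    exists vs; apply: ae_mono hvs => l [hsz hC _]; split; rewrite ?size_mkseq // => j hj.
    by have [? ?] := hC j hj; rewrite /fnth nth_mkseq.
  apply: ae_mono hvs => l [_ _ hw] x /hw ->.
  by apply: eq_bigr => j _; rewrite /fnth nth_mkseq.
exists vs; apply: ae_mono (ae_and hvs hsum) => l [[hsz _ hA] hs]; split => //.
  by move=> j /hA[].
by move=> x /hs ->; apply: eq_bigr => j _; case: (hA j (ltn_ord j)) => _ _ ->.
Qed.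

Lemma Vfam_sum_inj gs gs' : inVfam U G gs -> inVfam U G gs' ->
  ae U (fun l => forall x, offgrid (beta l) (G l) x ->
    \sum_(j < ell (G l)) fnth (gs l) j x = \sum_(j < ell (G l)) fnth (gs' l) j x) ->
  ae U (fun l => forall j, (j < ell (G l))%N -> fnth (gs l) j = fnth (gs' l) j).
Proof.
move=> [vs hvs] [vs' hvs'] hsum.
apply: ae_mono (ae_and grid_ae (ae_and hvs (ae_and hvs' hsum))).
move=> l [gl [[_ _ hA] [[_ _ hA'] hs]]] j hj.
have gsE k x : (k < ell (G l))%N -> fnth (gs l) k x = fnth (vs l) k x * chi (G l) k x.
  by case/hA => _ _ ->.
have gs'E k x : (k < ell (G l))%N -> fnth (gs' l) k x = fnth (vs' l) k x * chi (G l) k x.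
  by case/hA' => _ _ ->.
have [_ _ ->] := hA j hj; have [_ _ ->] := hA' j hj.
apply: (chi_expansion_inj gl _ hj) => x /hs.
rewrite (eq_bigr _ (fun k : 'I__ => fun _ => gsE k x (ltn_ord k))).
by rewrite (eq_bigr _ (fun k : 'I__ => fun _ => gs'E k x (ltn_ord k))) => ->.
Qed.

Lemma Vfam_orthogonal gs : inVfam U G gs ->
  ae U (fun l => forall j k, (j < ell (G l))%N -> (k < ell (G l))%N -> j <> k ->
                   orth0 (fnth (gs l) j) (fnth (gs l) k)).
Proof.
move=> [vs hvs]; apply: ae_mono (ae_and grid_ae hvs) => l [[g_sorted _ _ _] [_ _ hA]] j k hj hk jk.
have [_ _ ->] := hA j hj; have [_ _ ->] := hA k hk.
exact: orth0_mul_chi.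
Qed.

End Lambda.

Theorem mainTheorem3 (R : realType) (U : set (set (Idx R)))
    (beta eta : Idx R -> R) (G : Idx R -> seq R) :
  is_LambdaUF U -> is_grid U beta eta G ->
  [/\
  (forall f : R -> R, C1 f ->
     inFrakU U beta G (fun l x => f x * chiAB (beta l) (- beta l) (beta l) x)),
  (forall (w : Idx R -> R -> R) (a b : Idx R -> R),
     inFrakU U beta G w ->
     ae U (fun l => a l \in G l) -> ae U (fun l => b l \in G l) ->
     inFrakU U beta G (fun l x => w l x * chiAB (beta l) (a l) (b l) x)),
  ((forall w : Idx R -> R -> R, inFrakU U beta G w ->
     ae U (fun l => forall j, (0 < j < ell (G l))%N ->
        cvg (w l x @[x --> (nth 0 (G l) j)^'+]) /\
        cvg (w l x @[x --> (nth 0 (G l) j)^'-]))) /\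
  (forall w : Idx R -> R -> R, inFrakU U beta G w ->
     ae U (fun l => cvg (w l x @[x --> (nth 0 (G l) 0)^'+]) /\
                    cvg (w l x @[x --> (nth 0 (G l) (ell (G l)))^'-])))),
  (forall (u v : Idx R -> R -> R) (j k : Idx R -> nat),
     tildeC1 U u -> tildeC1 U v ->
     ae U (fun l => (j l < ell (G l))%N) -> ae U (fun l => (k l < ell (G l))%N) ->
     ae U (fun l => j l <> k l) ->
     ae U (fun l => orth0 (fun x => u l x * chi (G l) (j l) x)
                          (fun x => v l x * chi (G l) (k l) x))) &
  [/\ (forall w : Idx R -> R -> R,
         inFrakU U beta G w <->
         exists gs, inVfam U G gs /\
           ae U (fun l => forall x, offgrid (beta l) (G l) x ->
                   w l x = \sum_(j < ell (G l)) fnth (gs l) j x)),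
      (forall gs gs', inVfam U G gs -> inVfam U G gs' ->
         ae U (fun l => forall x, offgrid (beta l) (G l) x ->
                 \sum_(j < ell (G l)) fnth (gs l) j x =
                 \sum_(j < ell (G l)) fnth (gs' l) j x) ->
         ae U (fun l => forall j, (j < ell (G l))%N -> fnth (gs l) j = fnth (gs' l) j)) &
      (forall gs, inVfam U G gs ->
         ae U (fun l => forall j k, (j < ell (G l))%N -> (k < ell (G l))%N -> j <> k ->
                 orth0 (fnth (gs l) j) (fnth (gs l) k)))]].
Proof.
move=> U_ok G_grid; split.
- exact: (frakU_C1_mul_chiAB U_ok G_grid).
- exact: (frakU_mul_chiAB U_ok G_grid).
- by split=> w; [exact: (frakU_cvg_interior U_ok G_grid) | exact: (frakU_cvg_ends U_ok G_grid)].
- (* the cells are disjoint, so no regularity of u and v is needed *)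
  by move=> u v j k _ _; exact: (cells_orthogonal U_ok G_grid u v).
- split=> [w|gs gs'|gs]; first exact: (frakU_Vfam_sum U_ok).
    exact: (Vfam_sum_inj U_ok G_grid).
  exact: (Vfam_orthogonal U_ok G_grid).
Qed.
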